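(* Let $\tau,t\in\mathbb{R}$ and let $\beta_n=\beta_n(\tau,t)$ be the recurrence coefficients of the monic orthogonal polynomials for the weight $\omega(x;\tau,t)=\exp(-x^6+\tau x^4+tx^2)$ on $\mathbb{R}$. Then for $n\ge1$ \begin{align*} 6\beta_n\big(&\beta_{n-2}\beta_{n-1}+\beta_{n-1}^2+2\beta_{n-1}\beta_n+\beta_{n-1}\beta_{n+1}+\beta_n^2+2\beta_n\beta_{n+1}+\beta_{n+1}^2+\beta_{n+1}\beta_{n+2}\big)\\ &-4\tau\beta_n(\beta_{n-1}+\beta_n+\beta_{n+1})-2t\beta_n=n. \end{align*}
   Context: The monic orthogonal polynomials satisfy $P_{n+1}(x)=xP_n(x)-\beta_nP_{n-1}(x)$ with $P_{-1}=0$, $P_0=1$, where $\beta_n>0$ for $n\ge1$. The convention $\beta_0=\beta_{-1}=0$ is used. *)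

From HB Require Import structures.
From mathcomp Require Import all_boot all_order all_algebra.
From mathcomp Require Import all_classical all_reals all_analysis.
Set Implicit Arguments. Unset Strict Implicit. Unset Printing Implicit Defensive.
Import Order.TTheory GRing.Theory Num.Theory.
Local Open Scope ring_scope.
Local Open Scope classical_set_scope.

Definition sextic_weight {R : realType} (tau t : R) (x : R) : R :=
  expR (- x ^+ 6 + tau * x ^+ 4 + t * x ^+ 2).

Definition wprod {R : realType} (tau t : R) (p q : {poly R}) : \bar R :=
  (\int[lebesgue_measure]_(x in [set: R]) (p.[x] * q.[x] * sextic_weight tau t x)%:E)%E.

Definition orthogonal_family {R : realType} (tau t : R) (P : nat -> {poly R}) : Prop :=
  forall m n : nat, m <> n -> wprod tau t (P m) (P n) = 0%E.

From HB Require Import structures.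
From mathcomp Require Import all_boot all_order all_algebra.
From mathcomp Require Import all_classical all_reals all_analysis.
From mathcomp Require Import measurable_realfun.
From mathcomp Require Import ring lra zify.
Set Implicit Arguments.
Unset Strict Implicit.
Unset Printing Implicit Defensive.
Import Order.TTheory GRing.Theory Num.Theory.
Import numFieldNormedType.Exports.
Local Open Scope ring_scope.

(* Write w = exp V with V = -x^6 + tau x^4 + t x^2 and L p = \int p w.  As
   w decays faster than any Gaussian, p w is integrable and vanishes at
   infinity for every polynomial p, so integrating (p w)' = (p' + p V') w gives L (p' + p V') = 0.
   For p = P_n P_(n-1) orthogonality leaves n h_(n-1) = - L (V' P_n P_(n-1)),
   with h_k = L (P_k^2) = beta_k h_(k-1) <> 0.  Expanding x^j P_n with the
   recurrence x P_k = P_(k+1) + beta_k P_(k-1) and using orthogonality again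
   turns the right-hand side into the stated polynomial in the beta's times
   h_(n-1). *)

Definition sextic_exponent {R : nzRingType} (tau t : R) : {poly R} :=
  - 'X^6 + tau *: 'X^4 + t *: 'X^2.

Lemma deriv_sextic_exponent (R : nzRingType) (tau t : R) :
  (sextic_exponent tau t)^`() = (- 6) *: 'X^5 + (4 * tau) *: 'X^3 + (2 * t) *: 'X.
Proof.
rewrite !derivD derivN !derivZ !derivXn /= expr1.
by rewrite -!scalerA !scaler_nat scaleNr scaler_nat -!scalerMnr.
Qed.

Ltac decide_nat_eqs :=
  repeat match goal with
  | |- context [(?m == ?n)%N] =>
      first [ rewrite (_ : (m == n) = true); last by lia
            | rewrite (_ : (m == n) = false); last by lia ]
  end.

Lemma horner_sextic_exponent (R : comNzRingType) (tau t x : R) :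
  (sextic_exponent tau t).[x] = - x ^+ 6 + tau * x ^+ 4 + t * x ^+ 2.
Proof. by rewrite !hornerE. Qed.

Section RecurrenceMoments.
Variables (R : idomainType) (L : {scalar {poly R}}).
Variables (P : nat -> {poly R}) (beta : nat -> R).
Hypothesis P0 : P 0 = 1.
Hypothesis beta0 : beta 0 = 0.
Hypothesis P_rec : forall n, P n.+1 = 'X * P n - beta n *: P n.-1.
Hypothesis L_orth : forall m n, m <> n -> L (P m * P n) = 0.

Lemma mulX_P n : 'X * P n = P n.+1 + beta n *: P n.-1.
Proof. by rewrite P_rec subrK. Qed.

Lemma size_P_monic n : size (P n) = n.+1 /\ P n \is monic.
Proof.
elim/ltn_ind: n => -[|n] IH; first by rewrite P0 size_poly1 monic1.
have [sPn mPn] := IH n (ltnSn n).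
have sXPn : size ('X * P n) = n.+2.
  by rewrite mulrC size_mulX ?sPn // -size_poly_eq0 sPn.
have small : (size (- (beta n *: P n.-1))%R < size ('X * P n)%R)%N.
  rewrite size_polyN sXPn (leq_ltn_trans (size_scale_leq _ _)) //.
  by rewrite (IH n.-1 (leq_ltn_trans (leq_pred n) (ltnSn n))).1; lia.
rewrite P_rec size_polyDl // sXPn; split => //.
by rewrite monicE lead_coefDl // mulrC lead_coefMX.
Qed.

Lemma size_P n : size (P n) = n.+1. Proof. exact: (size_P_monic n).1. Qed.

Lemma size_deriv_P n : (size (P n)^`() <= n)%N.
Proof. by rewrite -ltnS -(size_P n) lt_size_deriv // -size_poly_eq0 size_P. Qed.

Lemma coef_P_deg n : (P n)`_n = 1.
Proof. by have [sP /monicP] := size_P_monic n; rewrite lead_coefE sP. Qed.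

Lemma size_sub_P d (r : {poly R}) :
  (size r <= d.+1)%N -> (size (r - r`_d *: P d)%R <= d)%N.
Proof.
move=> r_small; apply/leq_sizeP => j; rewrite leq_eqVlt => /predU1P[<-|dj].
  by rewrite coefB coefZ coef_P_deg mulr1 subrr.
rewrite coefB coefZ [r`_j]nth_default ?[(P d)`_j]nth_default ?size_P //.
  by rewrite mulr0 subr0.
exact: leq_trans r_small dj.
Qed.

Lemma L_P_mul_small d m (r : {poly R}) :
  (size r <= d)%N -> (d <= m)%N -> L (P m * r) = 0.
Proof.
elim: d r => [|d IH] r r_small dm.
  by move: r_small; rewrite size_poly_leq0 => /eqP->; rewrite mulr0 linear0.
rewrite -(subrK (r`_d *: P d) r) mulrDr linearD.
rewrite (IH _ (size_sub_P r_small) (ltnW dm)) add0r.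
by rewrite -scalerAr linearZ /= L_orth ?mulr0 //; lia.
Qed.

Definition sqnorm n := L (P n * P n).

Lemma L_P_mul_deg d (r : {poly R}) :
  (size r <= d.+1)%N -> L (P d * r) = r`_d * sqnorm d.
Proof.
move=> r_small; rewrite -{1}(subrK (r`_d *: P d) r) mulrDr linearD.
by rewrite (L_P_mul_small (size_sub_P r_small)) // -scalerAr linearZ add0r.
Qed.

Lemma L_P_mul_P m n : L (P m * P n) = (m == n)%:R * sqnorm n.
Proof. by case: eqP => [->|/L_orth->]; rewrite ?mul1r ?mul0r. Qed.

Lemma sqnormS n : sqnorm n.+1 = beta n.+1 * sqnorm n.
Proof.
have sXP : (size ('X * P n)%R <= n.+2)%N.
  by rewrite mulrC size_mulX ?size_P // -size_poly_eq0 size_P.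
have := L_P_mul_deg sXP; rewrite coefXM /= coef_P_deg mul1r => <-.
rewrite mulrA [P n.+1 * _]mulrC mulX_P mulrDl linearD -scalerAl linearZ /=.
by rewrite L_orth ?add0r //; lia.
Qed.

Definition moment j m n := L ('X^j * (P m * P n)).

Lemma moment0 m n : moment 0 m n = (m == n)%:R * sqnorm n.
Proof. by rewrite /moment expr0 mul1r L_P_mul_P. Qed.

Lemma momentS j m n : moment j.+1 m n = moment j m.+1 n + beta m * moment j m.-1 n.
Proof.
rewrite /moment exprSr -mulrA mulrA -mulrA [X in 'X^j * X]mulrA mulX_P.
by rewrite mulrDl mulrDr linearD -scalerAl -scalerAr linearZ.
Qed.

Hypothesis L1_neq0 : L 1 != 0.
Hypothesis beta_neq0 : forall n, (0 < n)%N -> beta n != 0.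

Lemma sqnorm_neq0 n : sqnorm n != 0.
Proof.
elim: n => [|n IH]; first by rewrite /sqnorm P0 mulr1.
by rewrite sqnormS mulf_neq0 ?beta_neq0.
Qed.

Variables tau t : R.
Hypothesis L_deriv : forall p, L (p^`() + p * (sextic_exponent tau t)^`()) = 0.

Lemma sqnorm_moments k : k.+1%:R * sqnorm k =
  6 * moment 5 k.+1 k - 4 * tau * moment 3 k.+1 k - 2 * t * moment 1 k.+1 k.
Proof.
have := L_deriv (P k.+1 * P k).
rewrite deriv_sextic_exponent derivM !linearD [_^`() * _]mulrC.
rewrite L_P_mul_deg ?size_deriv_P // coef_deriv coef_P_deg.
rewrite (L_P_mul_small (size_deriv_P k) (leqnSn k)) addr0.
rewrite !mulrDr -!scalerAr !linearD !linearZ /= /moment expr1.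
rewrite ![_ * 'X^_]mulrC [_ * 'X]mulrC => /eqP; rewrite addr_eq0 => /eqP->; ring.
Qed.

Lemma freud_equation n : (0 < n)%N ->
    6 * beta n * (beta (n - 2)%N * beta (n - 1)%N + beta (n - 1)%N ^+ 2
                  + 2 * beta (n - 1)%N * beta n + beta (n - 1)%N * beta n.+1
                  + beta n ^+ 2 + 2 * beta n * beta n.+1 + beta n.+1 ^+ 2
                  + beta n.+1 * beta n.+2)
    - 4 * tau * beta n * (beta (n - 1)%N + beta n + beta n.+1)
    - 2 * t * beta n = n%:R.
Proof.
case: n => // k _; rewrite subn1 (_ : k.+1 - 2 = k.-1)%N /=; last lia.
apply: (mulIf (sqnorm_neq0 k)); rewrite sqnorm_moments !momentS !moment0.
(* P_(-1) is encoded as P 0: for k < 4 the expansion reaches indices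
   truncated at 0, but always behind the factor beta 0 = 0. *)
case: k => [|[|[|[|k]]]] /=; rewrite ?beta0; decide_nat_eqs => /=; ring.
Qed.

End RecurrenceMoments.

Local Open Scope classical_set_scope.

Lemma exprn_le_expR (R : realType) (y : R) D : 0 <= y -> y ^+ D <= D`!%:R * expR y.
Proof.
case: D => [|n] y0; first by rewrite expr0 fact0 mul1r -expR0 ler_expR.
have fact_gt0 : 0 < n.+1`!%:R :> R by rewrite ltr0n fact_gt0.
rewrite mulrC -ler_pdivrMr //; apply: le_trans (expR_ge1Dxn n y0).
by rewrite lerDr.
Qed.

Lemma norm_horner_le (R : realDomainType) (r : {poly R}) x :
  `|r.[x]| <= (\sum_(i < size r) `|r`_i|) * (1 + `|x| ^+ size r).
Proof.
rewrite horner_coef mulr_suml; apply: le_trans (ler_norm_sum _ _ _) _.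
apply: ler_sum => i _; rewrite normrM normrX ler_wpM2l //.
have [x1|x1] := lerP `|x| 1.
  by rewrite -[X in X <= _]addr0 lerD ?exprn_ile1 ?exprn_ge0.
by rewrite -[X in X <= _]add0r lerD // ler_weXn2l ?ltW // ltnW.
Qed.

Lemma cvg_integral_sym_itv (R : realType) (f : R -> \bar R) :
  lebesgue_measure.-integrable [set: R] f ->
  (fun n : nat => (\int[lebesgue_measure]_(x in `[(- n.+1%:R)%R, n.+1%:R]) f x)%E)
    @ \oo --> (\int[lebesgue_measure]_(x in [set: R]) f x)%E.
Proof.
move=> intf; have mf := measurable_int _ intf.
pose D n : set R := `[(- n.+1%:R)%R, n.+1%:R].
pose f_ n := f \_ (D n).
have mf_ n : measurable_fun [set: R] (f_ n).
  by apply/(measurable_restrictT _ (measurable_itv _)); exact: measurable_funS mf.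
have f_f : {ae lebesgue_measure, forall x, [set: R] x -> f_ ^~ x @ \oo --> f x}.
  apply: aeW => x _; apply: cvg_near_cst; near=> n.
  rewrite /f_ patchE mem_set // /D /= in_itv /= -ler_norml ltW //.
  apply: lt_le_trans (truncnS_gt `|x|) _.
  by rewrite ler_nat ltnS; near: n; exact: nbhs_infty_ge.
have f_g : {ae lebesgue_measure, forall x n, [set: R] x -> (`|f_ n x| <= (abse \o f) x)%E}.
  apply: aeW => x n _; rewrite /f_ patchE; case: ifP => _ //=.
  by rewrite normr0 abse_ge0.
have [_ _] := @dominated_convergence _ _ _ lebesgue_measure _ measurableT f_ f _
  mf_ mf f_f (integrable_abse intf) f_g.
by under eq_fun => n do rewrite -integral_mkcond.
Unshelve. all: by end_near.
Qed.

Section FreudWeight.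
Variables (R : realType) (V : {poly R}).
(* Gives |x|^j exp V(x) <= j! e^A exp(-x^2), via |x|^j <= j! e^|x|. *)
Hypothesis V_gauss_dominated : exists A, forall x : R, `|x| + x ^+ 2 + V.[x] <= A.

Definition weighted (r : {poly R}) x := r.[x] * expR V.[x].

Lemma weighted_gauss_bound (r : {poly R}) :
  exists C, forall x, `|weighted r x| <= C * gauss_fun x.
Proof.
have [A hA] := V_gauss_dominated.
have mono j x : `|x| ^+ j * expR V.[x] <= j`!%:R * expR A * gauss_fun x.
  apply: le_trans (_ : j`!%:R * expR `|x| * expR V.[x] <= _).
    by rewrite ler_wpM2r ?expR_ge0 // exprn_le_expR.
  rewrite -!mulrA ler_wpM2l // /gauss_fun -!expRD ler_expR.
  by have := hA x; lra.
pose S := \sum_(i < size r) `|r`_i|.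
exists (S * (1 + (size r)`!%:R) * expR A) => x.
have S_ge0 : 0 <= S by rewrite sumr_ge0.
rewrite /weighted normrM (ger0_norm (expR_ge0 _)).
apply: le_trans (ler_wpM2r (expR_ge0 _) (norm_horner_le r x)) _.
rewrite -!mulrA ler_wpM2l // !mulrDl !mul1r mulrA.
by apply: lerD; [have := mono 0%N x; rewrite expr0 fact0 !mul1r | exact: mono].
Qed.

Lemma is_derive_weighted (r : {poly R}) (x : R) :
  is_derive x 1 (weighted r) (weighted (r^`() + r * V^`()) x).
Proof.
have dexp : is_derive x 1 (expR \o horner V) (expR V.[x] * V^`().[x]).
  exact: is_derive1_comp.
have := is_deriveM (is_derive_poly r x) dexp.
rewrite (_ : _ * _ = weighted r) // => /is_derive_eq; apply.
by rewrite /weighted hornerD hornerM /GRing.scale /=; ring.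
Qed.

Lemma continuous_weighted (r : {poly R}) : continuous (weighted r).
Proof.
move=> x; apply: differentiable_continuous; apply/derivable1_diffP.
by have [] := is_derive_weighted r x.
Qed.

Lemma measurable_weighted (r : {poly R}) :
  measurable_fun [set: R] (fun x => (weighted r x)%:E).
Proof.
by apply/measurable_EFinP; exact: continuous_measurable_fun (@continuous_weighted r).
Qed.

Lemma integrable_weighted (r : {poly R}) :
  lebesgue_measure.-integrable [set: R] (EFin \o weighted r).
Proof.
have [C HC] := weighted_gauss_bound r.
apply: (@le_integrable _ _ _ lebesgue_measure _ measurableT _
  (fun x => C%:E * (EFin \o gauss_fun) x)%E).
- exact: measurable_weighted.
- by move=> x _ /=; rewrite lee_fin (le_trans (HC x)) ?ler_norm.
- exact: integrableZl integrableT_gauss.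
Qed.

Definition wint r := Rintegral lebesgue_measure [set: R] (weighted r).

Lemma integral_weighted (r : {poly R}) :
  (\int[lebesgue_measure]_(x in [set: R]) (weighted r x)%:E)%E = (wint r)%:E.
Proof. by rewrite fineK // integrable_fin_num // integrable_weighted. Qed.

Lemma wint_is_linear : linear_for *%R wint.
Proof.
move=> c p q; rewrite /wint -RintegralZl ?integrable_weighted //.
have -> : \int[lebesgue_measure]_(x in [set: R]) (c * weighted p x) = wint (c *: p).
  by apply: eq_Rintegral => x _; rewrite /weighted hornerZ mulrA.
rewrite -RintegralD ?integrable_weighted //.
by apply: eq_Rintegral => x _; rewrite /weighted hornerD mulrDl.
Qed.

Lemma wint1_gt0 : 0 < wint 1.
Proof.
pose S := \sum_(i < size V) `|V`_i|.
have S_ge0 : 0 <= S by rewrite sumr_ge0.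
have lower x : 0 <= x <= 1 -> expR (- (S * 2)) <= weighted 1 x.
  move=> /andP[x0 x1]; rewrite /weighted hornerC mul1r ler_expR.
  have := norm_horner_le V x; rewrite -/S ler_norml => /andP[+ _].
  have : S * (1 + `|x| ^+ size V) <= S * 2.
    by rewrite ler_wpM2l // lerD2l exprn_ile1 ?ger0_norm.
  lra.
have w1_ge0 x : 0 <= weighted 1 x by rewrite /weighted hornerC mul1r expR_ge0.
have : ((expR (- (S * 2)))%:E * lebesgue_measure `[0%R, 1%R] <= (wint 1)%:E)%E.
  rewrite -integral_weighted -integral_cst //.
  apply: (@le_trans _ _ (\int[lebesgue_measure]_(x in `[0%R, 1%R]) (weighted 1 x)%:E)%E).
    apply: ge0_le_integral => //.
    - by move=> x /=; rewrite in_itv /= => /lower; rewrite lee_fin.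
    - exact: measurable_funS (@measurable_weighted 1).
  apply: ge0_subset_integral => //; first exact: measurable_weighted.
  by move=> x _; rewrite lee_fin.
rewrite lebesgue_measure_itv /= lte01 oppr0 adde0 mule1 lee_fin.
exact: lt_le_trans (expR_gt0 _).
Qed.

Lemma integral_itv_weighted_deriv (p : {poly R}) (a : R) : 0 < a ->
  (\int[lebesgue_measure]_(x in `[(- a)%R, a]) (weighted (p^`() + p * V^`()) x)%:E)%E
  = (weighted p a - weighted p (- a))%:E.
Proof.
move=> a_gt0; rewrite EFinB; apply: continuous_FTC2.
- by rewrite -subr_gt0 opprK; lra.
- exact: continuous_subspaceT (@continuous_weighted _).
- split.
  + by move=> x _; have [] := is_derive_weighted p x.
  + by apply: cvg_at_right_filter; exact: continuous_weighted.
  + by apply: cvg_at_left_filter; exact: continuous_weighted.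
- move=> x _; rewrite derive1E.
  exact: (@derive_val _ _ _ _ _ _ _ (is_derive_weighted p x)).
Qed.

Lemma weighted_decay (p : {poly R}) :
  exists C, forall y : R, y != 0 -> `|weighted p y| <= C / `|y|.
Proof.
have [C HC] := weighted_gauss_bound ('X * p).
exists `|C| => y y0; rewrite ler_pdivlMr ?normr_gt0 //.
move: (HC y); rewrite /weighted hornerM hornerX -mulrA normrM mulrC.
move=> /le_trans; apply.
rewrite (le_trans (ler_wpM2r (gauss_fun_ge0 y) (ler_norm C))) //.
by rewrite ler_piMr ?gauss_fun_le1.
Qed.

Lemma cvg_weighted_sym (p : {poly R}) :
  (fun n : nat => weighted p n.+1%:R - weighted p (- n.+1%:R)) @ \oo --> 0.
Proof.
have [C HC] := weighted_decay p.
apply: (@squeeze_cvgr _ _ _ _ (fun n => - (2 * C) * harmonic n)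
  (fun n => 2 * C * harmonic n)).
- apply: nearW => n; rewrite mulNr -ler_norml.
  have n_gt0 := ltr0Sn R n.
  have Hp : `|weighted p n.+1%:R| <= C / n.+1%:R.
    by rewrite -{2}(gtr0_norm n_gt0) HC ?lt0r_neq0.
  have Hm : `|weighted p (- n.+1%:R)| <= C / n.+1%:R.
    by rewrite -{2}(gtr0_norm n_gt0) -[`|n.+1%:R|]normrN HC ?oppr_eq0 ?lt0r_neq0.
  apply: le_trans (ler_normB _ _) _.
  by rewrite /harmonic /= mulr2n !mulrDl mul1r lerD.
- by rewrite -(mulr0 (- (2 * C))); exact: cvgMl_tmp cvg_harmonic.
- by rewrite -(mulr0 (2 * C)); exact: cvgMl_tmp cvg_harmonic.
Qed.

Lemma wint_deriv (p : {poly R}) : wint (p^`() + p * V^`()) = 0.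
Proof.
have := cvg_integral_sym_itv (integrable_weighted (p^`() + p * V^`())).
rewrite integral_weighted; under eq_fun => n do rewrite integral_itv_weighted_deriv //.
have cv0 : (fun n : nat => (weighted p n.+1%:R - weighted p (- n.+1%:R))%:E)
    @ \oo --> 0%:E.
  by apply: cvg_EFin; [exact: nearW | exact: cvg_weighted_sym].
by move=> cv; apply/EFin_inj; exact: (cvg_unique _ cv cv0).
Qed.

HB.instance Definition _ := GRing.isLinear.Build R {poly R} R *%R wint wint_is_linear.

Definition wint_scalar : {scalar {poly R}} := wint.

End FreudWeight.

Lemma cubic_le (R : realDomainType) (c u : R) : 2 <= c -> 0 <= u ->
  - u ^+ 3 + c * u ^+ 2 + c * u + 1 <= 4 * c ^+ 3 + 2 * c ^+ 2 + 1.
Proof.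
move=> c_ge2 u_ge0; have [u_le|u_gt] := lerP u (2 * c).
  have h1 : c * u ^+ 2 <= 4 * c ^+ 3.
    have : u ^+ 2 <= (2 * c) ^+ 2 by rewrite ler_pXn2r // ?nnegrE //; lra.
    rewrite exprMn; have : 0 <= c by lra.
    nra.
  have h2 : c * u <= 2 * c ^+ 2 by rewrite expr2; nra.
  have : 0 <= u ^+ 3 by rewrite exprn_ge0.
  lra.
have h1 : c * u ^+ 2 + c * u <= u ^+ 3.
  have : 1 <= u by lra.
  rewrite !expr2 exprS expr2; nra.
have : 0 <= c ^+ 3 by rewrite exprn_ge0 //; lra.
have : 0 <= c ^+ 2 by rewrite exprn_ge0 //; lra.
lra.
Qed.

Lemma sextic_exponent_dominated (R : realType) (tau t : R) :
  exists A, forall x : R, `|x| + x ^+ 2 + (sextic_exponent tau t).[x] <= A.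
Proof.
pose c := `|tau| + `|t| + 2.
have c_ge2 : 2 <= c by rewrite /c; have := normr_ge0 tau; have := normr_ge0 t; lra.
exists (4 * c ^+ 3 + 2 * c ^+ 2 + 1) => x.
rewrite horner_sextic_exponent.
have -> : x ^+ 6 = (x ^+ 2) ^+ 3 by rewrite -exprM.
have -> : x ^+ 4 = (x ^+ 2) ^+ 2 by rewrite -exprM.
have := cubic_le c_ge2 (sqr_ge0 x).
have : `|x| <= 1 + x ^+ 2.
  by rewrite -(real_normK (num_real x)); have := normr_ge0 x; nra.
move: (x ^+ 2) (sqr_ge0 x) => u u_ge0 x_le.
have : t * u <= `|t| * u by rewrite ler_wpM2r // ler_norm.
have : tau * u ^+ 2 <= `|tau| * u ^+ 2 by rewrite ler_wpM2r ?sqr_ge0 // ler_norm.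
have : `|tau| * u ^+ 2 <= c * u ^+ 2.
  by rewrite ler_wpM2r ?sqr_ge0 // /c; have := normr_ge0 t; lra.
have : `|t| * u + 2 * u <= c * u.
  have : 0 <= `|tau| * u by rewrite mulr_ge0.
  rewrite /c !mulrDl; lra.
lra.
Qed.

Lemma wprodE (R : realType) (tau t : R) (p q : {poly R}) :
  wprod tau t p q = (wint (sextic_exponent tau t) (p * q))%:E.
Proof.
rewrite /wprod -(integral_weighted (sextic_exponent_dominated tau t)).
apply: eq_integral => x _.
by rewrite /weighted /sextic_weight horner_sextic_exponent hornerM.
Qed.

Theorem lemma3p1 (R : realType) (tau t : R) (P : nat -> {poly R}) (beta : nat -> R) :
  P 0%N = 1 ->
  beta 0%N = 0 ->
  (forall n : nat, P n.+1 = 'X * P n - beta n *: P n.-1) ->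
  (forall n : nat, (1 <= n)%N -> 0 < beta n) ->
  orthogonal_family tau t P ->
  forall n : nat, (1 <= n)%N ->
    6 * beta n * (beta (n - 2)%N * beta (n - 1)%N + beta (n - 1)%N ^+ 2
                  + 2 * beta (n - 1)%N * beta n + beta (n - 1)%N * beta n.+1
                  + beta n ^+ 2 + 2 * beta n * beta n.+1 + beta n.+1 ^+ 2
                  + beta n.+1 * beta n.+2)
    - 4 * tau * beta n * (beta (n - 1)%N + beta n + beta n.+1)
    - 2 * t * beta n = n%:R.
Proof.
move=> P0 beta0 P_rec beta_gt0 orth.
have dom := sextic_exponent_dominated tau t.
apply: (@freud_equation _ (wint_scalar dom) P beta) => //.
- by move=> m k /orth; rewrite wprodE => -[].
- exact/lt0r_neq0/wint1_gt0.
- by move=> k /beta_gt0/lt0r_neq0.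
- exact: wint_deriv.
Qed.
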